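(* With $w=-x^{q^n-1}$ and $z=-y^{q^n-1}$ in the basic function field $F$, one has $K(u)=K(z,w)$.
   Context: Standing setup: $p$ is a prime, $q$ a power of $p$, $n\ge2$, $\ell=q^n$, and $K$ is either $\mathbb{F}_\ell$ or its algebraic closure $\overline{\mathbb{F}}_\ell$. For $a\ge1$, $\mathrm{Tr}_a(T)=T+T^q+\cdots+T^{q^{a-1}}$. Fix integers $j,k\ge1$ with $n=j+k$, $\gcd(j,k)=1$ and $p\nmid j$, and let $\alpha\in\mathbb{F}_p$ be the inverse of $j$ modulo $p$. The basic function field is $F=K(x,y)$ where $x$ is transcendental over $K$ and $y$ is algebraic over $K(x)$ with $\mathrm{Tr}_j(y/x^{q^k})+\mathrm{Tr}_k(y^{q^j}/x)=1$. $u\in F$ is the unique element with $y/x^{q^k}=\mathrm{Tr}_k(u)+\alpha$ and $y^{q^j}/x=-\mathrm{Tr}_j(u)$. *)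

From HB Require Import structures.
From mathcomp Require Import all_boot all_order all_algebra.
Set Implicit Arguments. Unset Strict Implicit. Unset Printing Implicit Defensive.
Import GRing.Theory.
Local Open Scope ring_scope.

Definition trq (R : pzRingType) (q a : nat) (t : R) : R :=
  \sum_(i < a) t ^+ (q ^ i)%N.

Definition subfield_closed (L : fieldType) (P : L -> Prop) : Prop :=
  [/\ P 1, (forall a b, P a -> P b -> P (a - b)),
      (forall a b, P a -> P b -> P (a * b)) & (forall a, P a -> P a^-1)].

(* t lies in the subfield of L generated by the image of iota : K -> L
   together with the elements of S, i.e. t is in K(S). *)
Definition in_genfield (K L : fieldType) (iota : K -> L) (S : seq L) (t : L)
  : Prop :=
  forall P : L -> Prop, subfield_closed P ->
    (forall c, P (iota c)) -> (forall s, s \in S -> P s) -> P t.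

Definition transcendental_over (K L : fieldType) (iota : {rmorphism K -> L})
  (x : L) : Prop :=
  forall P : {poly K}, P != 0 -> (map_poly iota P).[x] != 0.

(* K is F_ell (a field with exactly ell elements, of characteristic p) or
   an algebraic closure of F_ell (algebraically closed, and algebraic over
   the prime field F_p, i.e. every element is fixed by some p^m-Frobenius). *)
Definition is_Fell_or_closure (K : fieldType) (p ell : nat) : Prop :=
  p \in [pchar K] /\
  ((exists s : seq K, [/\ uniq s, size s = ell & forall t, t \in s])
   \/ (GRing.closed_field_axiom K /\
       forall t : K, exists m : nat, (0 < m)%N /\ t ^+ (p ^ m) = t)).

From HB Require Import structures.
From mathcomp Require Import all_boot all_order all_algebra.
From mathcomp Require Import zify ring.
Set Implicit Arguments.
Unset Strict Implicit.
Unset Printing Implicit Defensive.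

Import GRing.Theory.
Local Open Scope ring_scope.

(* Write a = y / x^(q^k) and b = y^(q^j) / x, so the curve reads
   Tr_j(a) + Tr_k(b) = 1, and put X = x^(Q-1), Y = y^(Q-1).  One checks
   b = X a^(q^j), b^(q^k) = Y a and a^Q = (Y / X^(q^k)) a; applying the
   additive map T |-> T^q - T to the curve gives a^(q^j) (1 - X) = a (1 - Y).
   Hence, for any subfield P containing K, X and Y, the set of m with
   a^(q^m) in P a contains j and j + k; it is closed under differences, so by
   the Euclidean algorithm it contains gcd(j, k) = 1 and then every m.  The
   curve then writes 1 as an element of P times a, so a and b lie in P.
   Since Tr_k(u) = a - 1/j and Tr_j(u) = -b, the same gcd argument applied to
   {m | Tr_m(u) in P} gives u = Tr_1(u) in P.  Conversely a, b lie in K(u),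
   and X = b / a^(q^j), Y = b^(q^k) / a. *)

Section SubfieldClosure.
Variables (L : fieldType) (P : L -> Prop).
Hypothesis HP : subfield_closed P.

Lemma subfield1 : P 1. Proof. by case: HP. Qed.

Lemma subfieldB a b : P a -> P b -> P (a - b).
Proof. by case: HP => _ + _ _; apply. Qed.

Lemma subfieldM a b : P a -> P b -> P (a * b).
Proof. by case: HP => _ _ + _; apply. Qed.

Lemma subfieldV a : P a -> P a^-1.
Proof. by case: HP => _ _ _; apply. Qed.

Lemma subfield0 : P 0.
Proof. by rewrite -(subrr 1); apply: subfieldB; apply: subfield1. Qed.

Lemma subfieldN a : P a -> P (- a).
Proof. by move=> Pa; rewrite -sub0r; apply: subfieldB => //; apply: subfield0. Qed.

Lemma subfieldD a b : P a -> P b -> P (a + b).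
Proof. by move=> Pa Pb; rewrite -(opprK b); apply: subfieldB => //; apply: subfieldN. Qed.

Lemma subfield_div a b : P a -> P b -> P (a / b).
Proof. by move=> Pa Pb; apply: subfieldM => //; apply: subfieldV. Qed.

Lemma subfieldX a m : P a -> P (a ^+ m).
Proof.
move=> Pa; elim: m => [|m IH]; first by rewrite expr0; apply: subfield1.
by rewrite exprS; apply: subfieldM.
Qed.

Lemma subfield_sum m (F : 'I_m -> L) : (forall i, P (F i)) -> P (\sum_(i < m) F i).
Proof. by move=> PF; apply: (big_ind P) => //; [apply: subfield0 | apply: subfieldD]. Qed.

Lemma subfield_trq q m t : P t -> P (trq q m t).
Proof. by move=> Pt; apply: subfield_sum => i; apply: subfieldX. Qed.

Lemma sum_multiple a m (F : 'I_m -> L) :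
  (forall i, exists2 r, P r & F i = r * a) ->
  exists2 R, P R & \sum_(i < m) F i = R * a.
Proof.
elim: m F => [|m IH] F HF; first by exists 0; [apply: subfield0 | rewrite big_ord0 mul0r].
have [R PR ER] := IH (fun i => F (widen_ord (leqnSn m) i)) (fun i => HF _).
have [r Pr Er] := HF ord_max.
by exists (R + r); [apply: subfieldD | rewrite big_ord_recr /= ER Er -mulrDl].
Qed.

End SubfieldClosure.

Section GeneratedField.
Variables (K L : fieldType) (iota : K -> L).

Lemma in_genfield_closed S : subfield_closed (in_genfield iota S).
Proof.
split=> [P HP|a b Ha Hb P HP PK PS|a b Ha Hb P HP PK PS|a Ha P HP PK PS].
- by move=> _ _; apply: subfield1.
- by apply: subfieldB (Ha P HP PK PS) (Hb P HP PK PS).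
- by apply: subfieldM (Ha P HP PK PS) (Hb P HP PK PS).
- by apply: subfieldV (Ha P HP PK PS).
Qed.

Lemma in_genfield_const S c : in_genfield iota S (iota c).
Proof. by move=> P _ PK _. Qed.

Lemma in_genfield_mem S s : s \in S -> in_genfield iota S s.
Proof. by move=> sS P _ _ PS; apply: PS. Qed.

Lemma in_genfield_trans S S' t :
  (forall s, s \in S -> in_genfield iota S' s) ->
  in_genfield iota S t -> in_genfield iota S' t.
Proof.
move=> SS' St; apply: St (in_genfield_closed S') _ SS'.
exact: in_genfield_const.
Qed.

End GeneratedField.

Lemma diff_closed_gcd (A : nat -> Prop) :
  (forall m d, A m -> A (m + d)%N -> A d) ->
  forall a b, A a -> A b -> A (gcdn a b).
Proof.
move=> Adiff a b; move: {2}(a + b)%N (leqnn (a + b)) => s.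
elim: s a b => [|s IH] [|a] [|b] //= hs Aa Ab; rewrite ?gcd0n ?gcdn0 //.
have [le_ab|lt_ba] := leqP a b.
  have Eb : b.+1 = (a.+1 + (b - a))%N by rewrite addSn subnKC.
  by rewrite Eb gcdnDl; apply: IH; [lia | | apply: (Adiff a.+1); rewrite -?Eb].
have Ea : a.+1 = (b.+1 + (a - b))%N by rewrite addSn subnKC // ltnW.
by rewrite Ea gcdnC gcdnDl gcdnC; apply: IH; [lia | apply: (Adiff b.+1); rewrite -?Ea |].
Qed.

Section QFrobenius.
Variables (L : fieldType) (q : nat).
Hypothesis hq : [pchar L].-nat q.

Lemma expq_gt0 m : (0 < q ^ m)%N.
Proof. by have /andP[] : [pchar L].-nat (q ^ m)%N by rewrite pnatX hq. Qed.

Lemma frobD m (s t : L) : (s + t) ^+ (q ^ m) = s ^+ (q ^ m) + t ^+ (q ^ m).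
Proof. by rewrite exprDn_pchar // pnatX hq. Qed.

Lemma frobB m (s t : L) : (s - t) ^+ (q ^ m) = s ^+ (q ^ m) - t ^+ (q ^ m).
Proof. by rewrite frobD exprNn_pchar // pnatX hq. Qed.

Lemma frobDq (s t : L) : (s + t) ^+ q = s ^+ q + t ^+ q.
Proof. by have := frobD 1 s t; rewrite expn1. Qed.

Lemma frob0 m : (0 : L) ^+ (q ^ m) = 0.
Proof. by rewrite expr0n eqn0Ngt expq_gt0. Qed.

Lemma frob_sum m n (F : 'I_n -> L) :
  (\sum_(i < n) F i) ^+ (q ^ m) = \sum_(i < n) F i ^+ (q ^ m).
Proof. exact: (big_morph (fun t : L => t ^+ (q ^ m)) (frobD m) (frob0 m)). Qed.

Lemma frob_comp a b (t : L) : (t ^+ (q ^ a)) ^+ (q ^ b) = t ^+ (q ^ (a + b)).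
Proof. by rewrite -exprM -expnD. Qed.

Lemma trq_split a b (t : L) : trq q (a + b) t = trq q a t + trq q b t ^+ (q ^ a).
Proof.
rewrite /trq big_split_ord /= frob_sum; congr (_ + _).
by apply: eq_bigr => i _; rewrite frob_comp addnC.
Qed.

Lemma trq_frob a m (t : L) : trq q a t ^+ (q ^ m) = trq q a (t ^+ (q ^ m)).
Proof. by rewrite /trq frob_sum; apply: eq_bigr => i _; rewrite !frob_comp addnC. Qed.

Lemma trqB a (s t : L) : trq q a (s - t) = trq q a s - trq q a t.
Proof. by rewrite /trq -sumrB; apply: eq_bigr => i _; rewrite frobB. Qed.

Lemma trq0 a : trq q a (0 : L) = 0.
Proof. by rewrite /trq big1 // => i _; rewrite frob0. Qed.

Lemma trq1 (t : L) : trq q 1 t = t.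
Proof. by rewrite /trq big_ord1 expn0 expr1. Qed.

(* The trace telescopes under T |-> T^q - T. *)
Lemma trq_tele a (t : L) : trq q a t ^+ q - trq q a t = t ^+ (q ^ a) - t.
Proof.
have frob1 (s : L) : s ^+ q = s ^+ (q ^ 1) by rewrite expn1.
rewrite frob1; elim: a => [|a IH].
  by rewrite /trq big_ord0 frob0 subrr expn0 expr1 subrr.
rewrite /trq big_ord_recr -/(trq q a t) /= frobD frob_comp opprD addrACA IH.
by rewrite addn1 addrC addrA subrK.
Qed.

Lemma trq_diff_closed (P : L -> Prop) (u : L) m d : subfield_closed P ->
  P (trq q m u) -> P (trq q (m + d) u) -> P (trq q d u).
Proof.
move=> HP Pm; rewrite trq_split => Pmd.
have Pdm : P (trq q d u ^+ (q ^ m)).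
  by rewrite -(addKr (trq q m u) (_ ^+ _)); apply: subfieldD => //; apply: subfieldN.
have -> : trq q d u = trq q d u ^+ (q ^ m) - trq q d (trq q m u ^+ q - trq q m u).
  by rewrite trq_tele trqB trq_frob opprB addrC subrK.
apply: subfieldB => //; apply: subfield_trq => //.
by apply: subfieldB => //; apply: subfieldX.
Qed.

Lemma trq_coprime (P : L -> Prop) (u : L) j k : subfield_closed P -> coprime j k ->
  P (trq q j u) -> P (trq q k u) -> P u.
Proof.
move=> HP cop Pj Pk; rewrite -(trq1 u) -(eqP cop).
exact: (diff_closed_gcd (fun m d => @trq_diff_closed P u m d HP) Pj Pk).
Qed.

End QFrobenius.

Section FrobeniusRatio.
Variables (L : fieldType) (q : nat) (P : L -> Prop) (a : L).
Hypotheses (HP : subfield_closed P) (a0 : a != 0).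

Definition frob_ratio m := exists2 r, P r & a ^+ (q ^ m) = r * a.

Lemma frob_ratio_diff m d : frob_ratio m -> frob_ratio (m + d) -> frob_ratio d.
Proof.
move=> [r1 P1 E1] [r2 P2 E2].
have r10 : r1 != 0.
  have : a ^+ (q ^ m) != 0 by rewrite expf_neq0.
  by rewrite E1 mulf_eq0 negb_or => /andP[].
have rq0 : r1 ^+ (q ^ d) != 0 by rewrite expf_neq0.
exists (r2 / r1 ^+ (q ^ d)); first by apply: subfield_div => //; apply: subfieldX.
rewrite -frob_comp E1 exprMn in E2.
by apply: (mulfI rq0); rewrite E2; field.
Qed.

Lemma frob_ratio_all j k : coprime j k -> frob_ratio j -> frob_ratio (j + k) ->
  forall m, frob_ratio m.
Proof.
move=> cop Rj Rjk.
have [g Pg Eg] : frob_ratio 1.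
  by rewrite -(eqP cop) -gcdnDl; apply: diff_closed_gcd frob_ratio_diff _ _ _ _.
elim=> [|m [r Pr Er]]; first by exists 1; [apply: subfield1 | rewrite expn0 expr1 mul1r].
exists (r ^+ (q ^ 1) * g); first by apply: subfieldM => //; apply: subfieldX.
by rewrite -addn1 -frob_comp Er exprMn Eg !mulrA.
Qed.

End FrobeniusRatio.

Section BasicCurve.
Variables (L : fieldType) (q j k : nat) (x y : L).
Hypotheses (hq : [pchar L].-nat q) (x0 : x != 0) (y0 : y != 0).
Hypothesis curve : trq q j (y / x ^+ (q ^ k)) + trq q k (y ^+ (q ^ j) / x) = 1.

Local Notation Q := (q ^ (j + k))%N.
Local Notation X := (x ^+ (Q - 1)).
Local Notation Y := (y ^+ (Q - 1)).
Local Notation a := (y / x ^+ (q ^ k)).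
Local Notation b := (y ^+ (q ^ j) / x).

Lemma exprQ (t : L) : t ^+ Q = t * t ^+ (Q - 1).
Proof. by rewrite -exprS subn1 prednK // (expq_gt0 hq). Qed.

Lemma curve_a_neq0 : a != 0.
Proof. by rewrite mulf_neq0 // invr_neq0 // expf_neq0. Qed.

Lemma curve_b : b = X * a ^+ (q ^ j).
Proof.
rewrite exprMn exprVn -exprM -expnD (addnC k) exprQ.
by field; rewrite !expf_neq0.
Qed.

Lemma curve_bk : b ^+ (q ^ k) = Y * a.
Proof.
rewrite exprMn exprVn -exprM -expnD exprQ.
by field; rewrite !expf_neq0.
Qed.

Lemma curve_aQ : a ^+ Q = (Y / X ^+ (q ^ k)) * a.
Proof.
have xkQ : (x ^+ (q ^ k)) ^+ Q = x ^+ (q ^ k) * X ^+ (q ^ k).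
  by rewrite -exprM mulnC exprM exprQ exprMn.
rewrite exprMn exprVn xkQ (exprQ y).
by field; rewrite !expf_neq0.
Qed.

(* Applying T |-> T^q - T to the curve. *)
Lemma curve_aj : 1 - X != 0 -> a ^+ (q ^ j) = ((1 - Y) / (1 - X)) * a.
Proof.
move=> X1; have := congr1 (fun t => t ^+ q - t) curve.
rewrite /= frobDq // opprD addrACA !trq_tele //.
rewrite expr1n subrr curve_bk curve_b => E.
have E2 : a ^+ (q ^ j) * (1 - X) = a * (1 - Y).
  by apply/eqP; rewrite -subr_eq0 -E; apply/eqP; ring.
by apply: (mulIf X1); rewrite E2; field; rewrite X1 expf_neq0.
Qed.

(* The element u with Tr_k(u) = a - c and Tr_j(u) = -b (in the paper c = 1/j). *)
Section Parametrization.
Variables (u c : L).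
Hypotheses (Hu1 : a = trq q k u + c) (Hu2 : b = - trq q j u).

Section Forward.
Variable P : L -> Prop.
Hypotheses (HP : subfield_closed P) (cop : coprime j k) (X1 : 1 - X != 0).
Hypotheses (PX : P X) (PY : P Y) (Pc : P c).

Lemma curve_frob_ratio m : frob_ratio q P a m.
Proof.
apply: (frob_ratio_all HP curve_a_neq0 cop).
  exists ((1 - Y) / (1 - X)); last exact: curve_aj.
  by apply: subfield_div => //; apply: subfieldB => //; apply: subfield1.
exists (Y / X ^+ (q ^ k)); last exact: curve_aQ.
by apply: subfield_div => //; apply: subfieldX.
Qed.

(* The curve expresses 1 as a P-multiple of a, so a is in P. *)
Lemma curve_Pa_of_XY : P a.
Proof.
have [R1 P1 E1] : exists2 R, P R & trq q j a = R * a.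
  by apply: sum_multiple => // i; apply: curve_frob_ratio.
have [R2 P2 E2] : exists2 R, P R & trq q k b = R * a.
  apply: sum_multiple => // i; have [r Pr Er] := curve_frob_ratio (j + i).
  exists (X ^+ (q ^ i) * r); first by apply: subfieldM => //; apply: subfieldX.
  by rewrite curve_b exprMn frob_comp Er (mulrA (X ^+ _)).
have R_a : (R1 + R2) * a = 1 by rewrite mulrDl -E1 -E2.
have R0 : R1 + R2 != 0 by apply: contra_eq_neq R_a => ->; rewrite mul0r eq_sym oner_neq0.
have -> : a = (R1 + R2)^-1 by apply: (mulfI R0); rewrite R_a mulfV.
by apply: subfieldV => //; apply: subfieldD.
Qed.

(* Tr_j(u) = -b and Tr_k(u) = a - c lie in P, and gcd(j, k) = 1. *)
Lemma curve_Pu_of_XY : P u.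
Proof.
have Pa := curve_Pa_of_XY.
have Pb : P b by rewrite curve_b; apply: subfieldM => //; apply: subfieldX.
apply: (trq_coprime hq HP cop).
  by rewrite -[trq _ _ _]opprK -Hu2; apply: subfieldN.
by rewrite -(addrK c (trq q k u)) -Hu1; apply: subfieldB.
Qed.

End Forward.

Section Backward.
Variable P : L -> Prop.
Hypotheses (HP : subfield_closed P) (Pu : P u) (Pc : P c).

Lemma curve_Pa_of_u : P a.
Proof. by rewrite Hu1; apply: subfieldD => //; apply: subfield_trq. Qed.

Lemma curve_Pb_of_u : P b.
Proof. by rewrite Hu2; apply: subfieldN => //; apply: subfield_trq. Qed.

Lemma curve_PY_of_u : P Y.
Proof.
have -> : Y = b ^+ (q ^ k) / a by rewrite curve_bk mulfK // curve_a_neq0.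
have [Pa Pb] := (curve_Pa_of_u, curve_Pb_of_u).
by apply: subfield_div => //; apply: subfieldX.
Qed.

Lemma curve_PX_of_u : P X.
Proof.
have -> : X = b / a ^+ (q ^ j) by rewrite curve_b mulfK // expf_neq0 // curve_a_neq0.
have [Pa Pb] := (curve_Pa_of_u, curve_Pb_of_u).
by apply: subfield_div => //; apply: subfieldX.
Qed.

End Backward.
End Parametrization.
End BasicCurve.

Section Transcendental.
Variables (K L : fieldType) (iota : {rmorphism K -> L}) (x : L).
Hypothesis htr : transcendental_over iota x.

Lemma transcendental_neq0 : x != 0.
Proof. by have := htr (negbT (@polyX_eq0 K)); rewrite map_polyX hornerX. Qed.

Lemma transcendental_expn_neq1 m : (0 < m)%N -> 1 - x ^+ m != 0.
Proof.
move=> m_gt0; have P0 : (1 - 'X ^+ m : {poly K}) != 0.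
  apply: contra_neq (oner_neq0 K) => /(congr1 (horner^~ 0)).
  by rewrite /= !hornerE expr0n eqn0Ngt m_gt0 subr0.
by have := htr P0; rewrite rmorphB rmorph1 /= map_polyXn !hornerE.
Qed.

End Transcendental.

Theorem lemma2p9 (p e n j k : nat) (K L : fieldType) (iota : {rmorphism K -> L})
  (x y u : L) :
  prime p -> (0 < e)%N -> (2 <= n)%N ->
  is_Fell_or_closure K p ((p ^ e) ^ n)%N ->
  (1 <= j)%N -> (1 <= k)%N -> n = (j + k)%N -> coprime j k -> ~~ (p %| j)%N ->
  transcendental_over iota x ->
  trq (p ^ e) j (y / x ^+ ((p ^ e) ^ k)) + trq (p ^ e) k (y ^+ ((p ^ e) ^ j) / x) = 1 ->
  in_genfield iota [:: x; y] u ->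
  y / x ^+ ((p ^ e) ^ k) = trq (p ^ e) k u + (j%:R)^-1 ->
  y ^+ ((p ^ e) ^ j) / x = - trq (p ^ e) j u ->
  let q := (p ^ e)%N in
  let w := - x ^+ (q ^ n - 1) in
  let z := - y ^+ (q ^ n - 1) in
  forall t : L, in_genfield iota [:: u] t <-> in_genfield iota [:: z; w] t.
Proof.
move=> hp he _ [chK _] hj _ -> cop _ htr curve _ Hu1 Hu2 q w z t.
have hq : [pchar L].-nat q.
  have chL : p \in [pchar L] := rmorph_pchar iota chK.
  by rewrite (eq_pnat _ (pcharf_eq chL)) pnatX pnat_id.
have x0 := transcendental_neq0 htr.
have y0 : y != 0.
  apply: contra_eq_neq curve => ->.
  by rewrite mul0r (frob0 hq) mul0r !(trq0 hq) addr0 eq_sym oner_neq0.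
have X1 : 1 - x ^+ (q ^ (j + k) - 1) != 0.
  apply: (transcendental_expn_neq1 htr); rewrite subn_gt0 -expnM.
  by rewrite -(exp1n (e * (j + k))) ltn_exp2r ?prime_gt1 // muln_gt0 he addn_gt0 hj.
have Kc S : in_genfield iota S (j%:R)^-1.
  rewrite -(rmorph_nat iota); apply: (subfieldV (in_genfield_closed iota S)).
  exact: in_genfield_const.
split; apply: in_genfield_trans => s; rewrite !inE.
- move/eqP->; have HP := in_genfield_closed iota [:: z; w].
  have Pz : in_genfield iota [:: z; w] z by apply: in_genfield_mem; rewrite inE eqxx.
  have Pw : in_genfield iota [:: z; w] w by apply: in_genfield_mem; rewrite !inE eqxx orbT.
  apply: (curve_Pu_of_XY hq x0 y0 curve Hu1 Hu2 HP cop X1 _ _ (Kc _)).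
    by rewrite -[x ^+ _]opprK; apply: (subfieldN HP Pw).
  by rewrite -[y ^+ _]opprK; apply: (subfieldN HP Pz).
- have HP := in_genfield_closed iota [:: u].
  have Pu : in_genfield iota [:: u] u by apply: in_genfield_mem; rewrite inE.
  case/orP=> /eqP->; apply: (subfieldN HP).
    exact: (curve_PY_of_u hq x0 y0 Hu1 Hu2 HP Pu (Kc _)).
  exact: (curve_PX_of_u hq x0 y0 Hu1 Hu2 HP Pu (Kc _)).
Qed.
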